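(* Let $p \ge 2$, $k = 2^{p-1}$ and let $M$ be the model matrix of the main effect model of the $2^{p-1}$ fractional factorial design of resolution $p$ (defined in the context). For every degree $2$ fiber $F$ with more than one element, choose a set $\mathcal{B}_F$ of $|F|-1$ moves, each of the form $\mathbf{x}-\mathbf{y}$ with $\mathbf{x},\mathbf{y}\in F$, such that the graph on $F$ with edges $\{\mathbf{x},\mathbf{y}\}$ for $\mathbf{x}-\mathbf{y}\in\mathcal{B}_F$ is connected. Then $\mathcal{B} = \bigcup_F \mathcal{B}_F$ is a minimal Markov basis for $M'$; that is, a minimal Markov basis for $M'$ is constructed as the set of moves connecting all degree $2$ fibers with more than one element.
   Context: Cells are indexed by $\mathbf{i} = (i_1,\ldots,i_{p-1}) \in \{0,1\}^{p-1}$; vectors in $\mathbb{Z}^k$ are indexed by cells. The design: in run $\mathbf{i}$, factor $m$ ($1\le m\le p-1$) is at level $(-1)^{i_m}$ and factor $p$ at level $(-1)^{i_1+\cdots+i_{p-1}}$ (defining relation: product of all $p$ factors is the identity). $M$ is the $k\times(p+1)$ matrix whose row for run $\mathbf{i}$ is $\big(1,(-1)^{i_1},\ldots,(-1)^{i_{p-1}},(-1)^{i_1+\cdots+i_{p-1}}\big)$. A move is $\mathbf{z}\in\mathbb{Z}^k$ with $M'\mathbf{z}=\mathbf{0}$. For $\mathbf{b}\in\mathbb{N}^k$ the fiber is $\mathcal{F}(M'\mathbf{b})=\{\mathbf{y}\in\mathbb{N}^k : M'\mathbf{y}=M'\mathbf{b}\}$; it is a degree $2$ fiber if $\sum_{\mathbf{i}}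 b(\mathbf{i}) = 2$. For a set $\mathcal{B}$ of moves, $G(\mathbf{b},\mathcal{B})$ is the graph on $\mathcal{F}(M'\mathbf{b})$ joining $\mathbf{x},\mathbf{y}$ when $\pm(\mathbf{y}-\mathbf{x})\in\mathcal{B}$. A finite set $\mathcal{B}$ of moves is a Markov basis for $M'$ if $G(\mathbf{b},\mathcal{B})$ is connected for every $\mathbf{b}\in\mathbb{N}^k$, and minimal if no proper subset is a Markov basis. *)

From HB Require Import structures.
From mathcomp Require Import all_boot all_order all_algebra.
From mathcomp Require Import finmap.
From Stdlib Require Import Relations.
Set Implicit Arguments. Unset Strict Implicit. Unset Printing Implicit Defensive.
Import GRing.Theory Num.Theory.
Local Open Scope ring_scope.
Local Open Scope fset_scope.

(* Cells i = (i_1,...,i_{p-1}) in {0,1}^{p-1}  (true = 1). k = 2^(p-1) = #|cell p|. *)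
Definition cell (p : nat) := {ffun 'I_p.-1 -> bool}.

Definition zvec (p : nat) := {ffun cell p -> int}.
Definition nvec (p : nat) := {ffun cell p -> nat}.

Definition toZ (p : nat) (y : nvec p) : zvec p := [ffun i => (y i)%:Z].

(* Entry (i, j) of the k x (p+1) model matrix M, j = 0..p:
   column 0 : 1;
   column j, 1 <= j <= p-1 : (-1)^(i_j)  (the unique m < p-1 with m+1 = j);
   column p : (-1)^(i_1 + ... + i_{p-1}). *)
Definition Mentry (p : nat) (i : cell p) (j : 'I_p.+1) : int :=
  if (j : nat) == 0%N then 1
  else if (j : nat) == p then (-1) ^+ (\sum_(m < p.-1) nat_of_bool (i m))
  else (-1) ^+ (\sum_(m < p.-1 | (m.+1 == j)%N) nat_of_bool (i m)).

Definition Mt (p : nat) (z : zvec p) (j : 'I_p.+1) : int :=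
  \sum_(i : cell p) Mentry i j * z i.

Definition is_move (p : nat) (z : zvec p) : Prop := forall j, Mt z j = 0.

Definition inFiber (p : nat) (b y : nvec p) : Prop :=
  forall j, Mt (toZ y) j = Mt (toZ b) j.

Definition deg2 (p : nat) (b : nvec p) : Prop := (\sum_(i : cell p) b i)%N = 2%N.

Definition gedge (p : nat) (B : {fset zvec p}) (b : nvec p) (x y : nvec p) : Prop :=
  [/\ inFiber b x, inFiber b y &
      ((toZ y - toZ x) \in B \/ (toZ x - toZ y) \in B)].

Definition gconnected (p : nat) (B : {fset zvec p}) (b : nvec p) : Prop :=
  forall x y, inFiber b x -> inFiber b y -> clos_refl_trans _ (gedge B b) x y.

Definition markov_basis (p : nat) (B : {fset zvec p}) : Prop :=
  (forall z, z \in B -> is_move z) /\ (forall b : nvec p, gconnected B b).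

Definition minimal_markov_basis (p : nat) (B : {fset zvec p}) : Prop :=
  markov_basis B /\ (forall B' : {fset zvec p}, B' `<` B -> ~ markov_basis B').

Definition fiber_set (p : nat) (b : nvec p) (S : {fset nvec p}) : Prop :=
  forall y, y \in S <-> inFiber b y.

Definition nontrivial_fiber (p : nat) (b : nvec p) : Prop :=
  exists y, inFiber b y /\ y <> b.

From HB Require Import structures.
From mathcomp Require Import all_boot all_order all_algebra.
From mathcomp Require Import finmap.
From mathcomp Require Import zify.
From Stdlib Require Import Relations Classical.
Set Implicit Arguments. Unset Strict Implicit. Unset Printing Implicit Defensive.
Import GRing.Theory Num.Theory.

(* A run is the even-weight binary word of length p formed by the levels of the p
   factors, and M' y records the size of y and its p column sums. So a fiber is a set of
   multisets of even-weight words with prescribed size and column sums, and a degree 2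
   move exchanges two words u, v for u', v' with u + v = u' + v'.

   The main step is that such exchanges connect every fiber. Given y and z in one fiber,
   we make the multisets of length-t prefixes agree for t = 0, 1, ..., p - 1, the last
   case meaning y = z. If the prefixes of length t agree but bit t is distributed
   differently among the prefix classes, exchanging a word u of a class with a surplus
   of ones in bit t against a word v of a class with a deficit, flipping bit t and a later
   bit in which they differ, reduces the discrepancy. Even weight provides such a later
   bit when the two classes have the same prefix parity; otherwise either a preliminary
   exchange flipping two later bits creates one, or a parity count of the suffix
   distances to u contradicts the equality of the column sums.

   Hence the union B of the spanning sets B_F is a Markov basis. It is minimal because
   two elements of a degree 2 fiber have disjoint supports: a move x - y of B determines
   x and y, hence its fiber F, so without one move of B_F only |F| - 2 moves of B join
   points of F. *)

Section Reachability.
Local Open Scope fset_scope.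
Variable T : choiceType.

Definition joined (es : seq (T * T)) (x y : T) : Prop :=
  exists2 e, e \in es & ((e.1 == x) && (e.2 == y)) || ((e.1 == y) && (e.2 == x)).

Definition reachable (es : seq (T * T)) (R : {fset T}) (x : T) : Prop :=
  exists2 r, r \in R & clos_refl_trans T (joined es) r x.

Lemma joined_cons e es x y : joined (e :: es) x y ->
  joined es x y \/ ((x = e.1 /\ y = e.2) \/ (x = e.2 /\ y = e.1)).
Proof.
case=> f; rewrite inE => /orP[/eqP ->|fe] h; last by left; exists f.
right; case/orP: h => /andP[/eqP -> /eqP ->]; by [left | right].
Qed.

Lemma joined_sym es x y : joined es x y -> joined es y x.
Proof. by case=> e he h; exists e; rewrite // orbC. Qed.

Lemma reachable_nil R x : reachable [::] R x -> x \in R.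
Proof. by case=> r hr /clos_rt_rtn1_iff [//|y z []]. Qed.

Lemma reachable_cons_skip e es R x :
  ~ reachable es R e.1 -> ~ reachable es R e.2 ->
  reachable (e :: es) R x -> reachable es R x.
Proof.
move=> n1 n2 [r hr /clos_rt_rtn1_iff c]; elim: c => [|y z j _ [r' hr' c']].
  by exists r => //; apply: rt_refl.
case/joined_cons: j => [j|[[ey _]|[ey _]]].
- by exists r' => //; apply: rt_trans c' (rt_step _ _ _ _ j).
- by case: n1; exists r' => //; rewrite -ey.
- by case: n2; exists r' => //; rewrite -ey.
Qed.

Lemma reachable_cons_extend e es R x a b :
  reachable es R a -> e = (a, b) \/ e = (b, a) ->
  reachable (e :: es) R x -> reachable es (R `|` [fset b]) x.
Proof.
move=> [ra hra ca] hab [r hr /clos_rt_rtn1_iff c].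
have endpoint z : z = a \/ z = b -> reachable es (R `|` [fset b]) z.
  case=> ->; first by exists ra; rewrite ?in_fsetU ?hra.
  by exists b; [rewrite in_fsetU in_fset1 eqxx orbT | apply: rt_refl].
elim: c => [|y z j _ [r' hr' c']]; first by exists r; [rewrite in_fsetU hr | apply: rt_refl].
case/joined_cons: j => [j|[[_ ez]|[_ ez]]].
- by exists r' => //; apply: rt_trans c' (rt_step _ _ _ _ j).
- by apply: endpoint; case: hab => He; rewrite ez He; [right | left].
- by apply: endpoint; case: hab => He; rewrite ez He; [left | right].
Qed.

Lemma card_reachable_le (es : seq (T * T)) (R X : {fset T}) :
  (forall x, x \in X -> reachable es R x) -> (#|` X| <= #|` R| + size es)%N.
Proof.
elim: es R => [|e es IH] R hX.
  by rewrite addn0; apply/fsubset_leq_card/fsubsetP => x /hX /reachable_nil.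
have extend a b : reachable es R a -> e = (a, b) \/ e = (b, a) ->
    (#|` X| <= #|` R| + size (e :: es))%N.
  move=> ha hab; have := IH _ (fun x hx => reachable_cons_extend ha hab (hX x hx)).
  have : (#|` R `|` [fset b]| <= #|` R| + 1)%N.
    by rewrite cardfsU cardfs1 leq_subLR leq_addl.
  rewrite /=; lia.
case: (classic (reachable es R e.1)) => [h1|n1].
  by apply: (extend _ e.2 h1); left; case: e {IH hX extend h1}.
case: (classic (reachable es R e.2)) => [h2|n2].
  by apply: (extend _ e.1 h2); right; case: e {IH hX extend n1 h2}.
have := IH R (fun x hx => reachable_cons_skip n1 n2 (hX x hx)); rewrite /=; lia.
Qed.

End Reachability.

Lemma ltn_sum_witness (I : finType) (P : pred I) (f g : I -> nat) i0 :
  (forall i, P i -> f i <= g i) -> P i0 -> f i0 < g i0 ->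
  \sum_(i | P i) f i < \sum_(i | P i) g i.
Proof.
move=> h p0 lt0; rewrite (bigD1 i0) //= [X in _ < X](bigD1 i0) //=.
by rewrite -addSn leq_add //; apply: leq_sum => i /andP[pi _]; apply: h.
Qed.

Lemma eq_sum_ltn_exists (I : finType) (P : pred I) (f g : I -> nat) i0 :
  \sum_(i | P i) f i = \sum_(i | P i) g i -> P i0 -> f i0 < g i0 ->
  exists2 i1, P i1 & g i1 < f i1.
Proof.
move=> e p0 lt0; apply: NNPP => hn.
have : \sum_(i | P i) f i < \sum_(i | P i) g i.
  apply: (ltn_sum_witness (i0 := i0)) => // i pi; rewrite leqNgt; apply/negP => hi.
  by apply: hn; exists i.
by rewrite e ltnn.
Qed.

Lemma sum_index_iota_gt0 (a b : nat) (F : nat -> bool) :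
  0 < \sum_(a <= k < b) F k -> exists k, [/\ a <= k, k < b & F k].
Proof.
rewrite lt0n sum_nat_seq_neq0 => /hasP[k]; rewrite mem_index_iota => /andP[h1 h2] Fk.
by exists k; split => //; case: (F k) Fk.
Qed.

Lemma sum_index_iota_gt1 (a b : nat) (F : nat -> bool) :
  1 < \sum_(a <= k < b) F k ->
  exists k l, [/\ k != l, a <= k < b, a <= l < b, F k & F l].
Proof.
move=> h.
have [k [h1 h2 hk]] : exists k, [/\ a <= k, k < b & F k] by apply: sum_index_iota_gt0; lia.
have km : k \in index_iota a b by rewrite mem_index_iota h1 h2.
move: h; rewrite (bigD1_seq k km (iota_uniq _ _)) hk /= => h.
have : 0 < \sum_(i <- index_iota a b | i != k) F i by lia.
rewrite lt0n sum_nat_seq_neq0 => /hasP[l]; rewrite mem_index_iota => hl /andP[lk Fl].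
exists k, l; split; rewrite ?h1 ?h2 //; first by rewrite eq_sym.
by case: (F l) Fl.
Qed.

Lemma sum_eqn_index_iota (k m : nat) : \sum_(0 <= x < m) (x == k) = (k < m).
Proof.
elim: m => [|m IH]; first by rewrite big_geq.
rewrite big_nat_recr // IH; case: (ltngtP k m) => [h|h|->] /=.
- by rewrite ltnS (ltnW h).
- by rewrite ltnS leqNgt h.
- by rewrite ltnSn.
Qed.

Lemma odd_sum_addb (a m : nat) (f g : nat -> bool) :
  odd (\sum_(a <= x < m) (f x (+) g x)) =
  odd (\sum_(a <= x < m) f x) (+) odd (\sum_(a <= x < m) g x).
Proof.
have addb_nat (b c : bool) : (b (+) c) + 2 * (b && c) = b + c by case: b; case: c.
have h : \sum_(a <= x < m) (f x (+) g x) + 2 * \sum_(a <= x < m) (f x && g x)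
   = \sum_(a <= x < m) f x + \sum_(a <= x < m) g x.
  by rewrite big_distrr -!big_split /=; apply: eq_bigr => x _; apply: addb_nat.
by move: (congr1 odd h); rewrite mul2n !oddD odd_double addbF.
Qed.

Lemma odd_sum_neq_exists (a b : nat) (f g : nat -> bool) :
  odd (\sum_(a <= k < b) f k) != odd (\sum_(a <= k < b) g k) ->
  exists k, [/\ a <= k, k < b & f k != g k].
Proof.
move=> h0; have h : odd (\sum_(a <= k < b) (f k (+) g k)).
  by rewrite odd_sum_addb -negb_eqb.
have : 0 < \sum_(a <= k < b) (f k (+) g k) by move: h; case: (\sum_(a <= k < b) _).
by case/sum_index_iota_gt0 => k [h1 h2 h3]; exists k; rewrite negb_eqb.
Qed.

Section Words.
Variable n : nat.
Local Notation C := (cell n.+1).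

(* Run i is read as the even-weight word bit i 0, ..., bit i n of length p = n.+1:
   bit i k is the level of factor k.+1 (true for -1), the last one being the parity. *)
Definition coord (i : C) (k : nat) : bool :=
  if @insub nat (fun k => k < n) _ k is Some m then i m else false.
Definition parity (i : C) : bool := odd (\sum_(0 <= k < n) coord i k).
Definition bit (i : C) (k : nat) : bool := if k < n then coord i k else parity i.

Lemma coord_ord (i : C) (m : 'I_n) : coord i m = i m.
Proof. by rewrite /coord valK. Qed.

Lemma coord_ge (i : C) k : n <= k -> coord i k = false.
Proof. by move=> h; rewrite /coord insubF // ltnNge h. Qed.

Lemma bit_ord (i : C) (m : 'I_n) : bit i m = i m.
Proof. by rewrite /bit ltn_ord coord_ord. Qed.

Lemma bit_last (i : C) : bit i n = parity i.
Proof. by rewrite /bit ltnn. Qed.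

Lemma sum_coord (i : C) : \sum_(m < n) i m = \sum_(0 <= k < n) coord i k.
Proof. by rewrite big_mkord; apply: eq_bigr => m _; rewrite coord_ord. Qed.

Lemma even_sum_bit (i : C) : ~~ odd (\sum_(0 <= k < n.+1) bit i k).
Proof.
rewrite big_nat_recr //= bit_last.
have -> : \sum_(0 <= k < n) bit i k = \sum_(0 <= k < n) coord i k.
  by apply: eq_big_nat => k /andP[_ h]; rewrite /bit h.
by rewrite oddD /parity; case: (odd _).
Qed.

Lemma cell_bitP (i j : C) : (forall k, k < n -> bit i k = bit j k) -> i = j.
Proof. by move=> h; apply/ffunP => m; rewrite -!bit_ord h. Qed.

Definition flip2 (k l : nat) (i : C) : C :=
  [ffun m : 'I_n => i m (+) ((val m == k) || (val m == l))].

Lemma coord_flip2 k l (i : C) x :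
  coord (flip2 k l i) x = coord i x (+) ((x < n) && ((x == k) || (x == l))).
Proof.
case: (ltnP x n) => h; last by rewrite !coord_ge.
by have -> : x = Ordinal h by []; rewrite !coord_ord ffunE.
Qed.

Lemma parity_flip2 k l (i : C) : k != l ->
  parity (flip2 k l i) = parity i (+) ((k < n) (+) (l < n)).
Proof.
move=> kl; rewrite /parity.
have -> : \sum_(0 <= x < n) coord (flip2 k l i) x =
          \sum_(0 <= x < n) (coord i x (+) ((x == k) || (x == l))).
  by apply: eq_big_nat => x /andP[_ h]; rewrite coord_flip2 h.
rewrite odd_sum_addb; congr (_ (+) _).
have -> : \sum_(0 <= x < n) ((x == k) || (x == l)) = \sum_(0 <= x < n) ((x == k) + (x == l)).
  apply: eq_bigr => x _; case: (eqVneq x k) => [->|//].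
  by rewrite (negbTE kl).
by rewrite big_split !sum_eqn_index_iota oddD; case: (k < n); case: (l < n).
Qed.

Lemma bit_flip2 k l (i : C) x : k != l -> k < n.+1 -> l < n.+1 -> x < n.+1 ->
  bit (flip2 k l i) x = bit i x (+) ((x == k) || (x == l)).
Proof.
move=> kl hk hl hx; rewrite /bit; case: ifP => h; first by rewrite coord_flip2 h.
rewrite parity_flip2 //; congr (_ (+) _).
have xn : x = n by apply/eqP; rewrite eqn_leq -ltnS hx leqNgt h.
subst x; rewrite !ltnS in hk hl.
case: (ltngtP k n) => [k1|k1|k1]; case: (ltngtP l n) => [l1|l1|l1] //=.
all: first [by move: hl; rewrite leqNgt l1 | by move: hk; rewrite leqNgt k1
           | by move: kl; rewrite k1 l1 eqxx].
Qed.

End Words.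

Section Fibers.
Variable n : nat.
Local Notation C := (cell n.+1).
Local Notation V := (nvec n.+1).

Definition vadd (a b : V) : V := [ffun i => a i + b i].
Definition delta (u : C) : V := [ffun i => nat_of_bool (i == u)].
Definition vpair (u v : C) : V := vadd (delta u) (delta v).
Definition wsum (y : V) (f : C -> nat) := \sum_i y i * f i.
Definition total (y : V) := wsum y (fun _ => 1).
Definition colsum (y : V) (k : nat) := wsum y (fun i => bit i k).
Definition same_margins (y z : V) :=
  total y = total z /\ forall k, k < n.+1 -> colsum y k = colsum z k.

Lemma wsum_vadd a b f : wsum (vadd a b) f = wsum a f + wsum b f.
Proof. by rewrite /wsum -big_split; apply: eq_bigr => i _; rewrite ffunE mulnDl. Qed.

Lemma wsum_delta u f : wsum (delta u) f = f u.
Proof.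
rewrite /wsum (bigD1 u) //= big1 ?addn0; first by rewrite ffunE eqxx mul1n.
by move=> i /negbTE h; rewrite ffunE h.
Qed.

Lemma wsum_vpair u v f : wsum (vpair u v) f = f u + f v.
Proof. by rewrite /vpair wsum_vadd !wsum_delta. Qed.

Lemma wsum_eq1 (y : V) g : wsum y (fun x => x == g) = y g.
Proof.
rewrite /wsum (bigD1 g) //= eqxx muln1 big1 ?addn0 // => x /negbTE ->.
by rewrite muln0.
Qed.

Lemma wsum_gt0 (y : V) f : 0 < wsum y f -> exists x, 0 < y x /\ 0 < f x.
Proof.
move=> h; apply: NNPP => hn; move: h; rewrite /wsum big1 // => x _.
apply/eqP; rewrite muln_eq0; apply/negPn/negP => /norP[a b].
by apply: hn; exists x; rewrite !lt0n.
Qed.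

Lemma wsum_split (y : V) (P Q : C -> bool) :
  wsum y (fun x => P x) = wsum y (fun x => P x && Q x) + wsum y (fun x => P x && ~~ Q x).
Proof.
rewrite /wsum -big_split; apply: eq_bigr => x _ /=; rewrite -mulnDr.
by case: (P x); case: (Q x).
Qed.

Lemma leq_wsum (y : V) f g : (forall x, f x <= g x) -> wsum y f <= wsum y g.
Proof. by move=> h; apply: leq_sum => x _; rewrite leq_mul2l h orbT. Qed.

Lemma eq_wsum (y : V) f g : (forall x, 0 < y x -> f x = g x) -> wsum y f = wsum y g.
Proof.
move=> h; apply: eq_bigr => x _; case: (posnP (y x)) => [->|hx]; first by rewrite !mul0n.
by rewrite h.
Qed.

Lemma same_margins_refl y : same_margins y y.
Proof. by []. Qed.

Lemma same_margins_sym y z : same_margins y z -> same_margins z y.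
Proof. by case=> h1 h2; split=> // k hk; rewrite h2. Qed.

Lemma same_margins_trans y z w : same_margins y z -> same_margins z w -> same_margins y w.
Proof. by case=> h1 h2 [h3 h4]; split=> [|k hk]; [rewrite h1 | rewrite h2 ?h4]. Qed.

Lemma same_margins_vadd r a b : same_margins a b -> same_margins (vadd r a) (vadd r b).
Proof.
case=> h1 h2; split=> [|k hk]; rewrite /total /colsum !wsum_vadd.
  by rewrite -/(total a) h1.
by rewrite -/(colsum a k) h2.
Qed.

Lemma wsum_bit_neq (y z : V) k c : same_margins y z -> k < n.+1 ->
  wsum y (fun w => bit w k != c) = wsum z (fun w => bit w k != c).
Proof.
case=> ht hc hk.
have split0 (y0 : V) : total y0 = colsum y0 k + wsum y0 (fun x => ~~ bit x k).
  exact: (wsum_split y0 (fun _ => true) (fun x => bit x k)).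
case: c.
  have e (y0 : V) : wsum y0 (fun w => bit w k != true) = wsum y0 (fun x => ~~ bit x k).
    by apply: eq_bigr => x _; case: (bit x k).
  rewrite !e; have := split0 y; have := split0 z; rewrite ht (hc k hk); lia.
have e (y0 : V) : wsum y0 (fun w => bit w k != false) = colsum y0 k.
  by apply: eq_bigr => x _; case: (bit x k).
by rewrite !e hc.
Qed.

Section FiberMargins.
Local Open Scope ring_scope.

Lemma Mentry_first (i : C) (j : 'I_n.+2) : (j : nat) = 0%N -> Mentry i j = 1.
Proof. by move=> h; rewrite /Mentry h. Qed.

Lemma Mentry_bit (i : C) (j : 'I_n.+2) k : (j : nat) = k.+1 ->
  Mentry i j = (if bit i k then -1 else 1).
Proof.
have sign_bool (b : bool) : (-1) ^+ (nat_of_bool b) = (if b then -1 else 1 : int).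
  by case: b.
move=> h; rewrite /Mentry h /=.
have kn : (k < n.+1)%N by move: (ltn_ord j); rewrite h.
case: (eqVneq k n) => [e|ne].
  by subst k; rewrite eqxx bit_last /parity -sum_coord -signr_odd sign_bool.
have kn' : (k < n)%N by rewrite ltn_neqAle ne -ltnS.
have -> : (k.+1 == n.+1) = false by apply/negbTE; rewrite eqSS.
rewrite (@big_pred1 _ _ _ _ (Ordinal kn')) /=; last by move=> m; rewrite /= eqSS.
by rewrite -bit_ord sign_bool.
Qed.

Lemma Mt_total (y : V) (j : 'I_n.+2) : (j : nat) = 0%N -> Mt (toZ y) j = (total y)%:Z.
Proof.
move=> h; rewrite /Mt /total /wsum (big_morph Posz PoszD (erefl _)); apply: eq_bigr => i _.
by rewrite Mentry_first // ffunE mul1r muln1.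
Qed.

Lemma Mt_colsum (y : V) (j : 'I_n.+2) k : (j : nat) = k.+1 ->
  Mt (toZ y) j = (total y)%:Z - 2 * (colsum y k)%:Z.
Proof.
move=> h; rewrite /Mt /total /colsum /wsum !(big_morph Posz PoszD (erefl _)) mulr_sumr -sumrB.
apply: eq_bigr => i _; rewrite (Mentry_bit _ h) ffunE muln1 PoszM.
by case: (bit i k) => /=; [rewrite mulr1 mulN1r; lia | rewrite mul1r mulr0 subr0].
Qed.

Lemma inFiberE (y z : V) : inFiber y z <-> same_margins y z.
Proof.
pose j0 := @Ordinal n.+2 0 isT.
split=> [h|[ht hc] j].
  have ht : total z = total y by move: (h j0); rewrite !Mt_total // => [[]].
  split=> // k hk; move: (h (@Ordinal n.+2 k.+1 hk)); rewrite !(@Mt_colsum _ _ k) // ht.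
  by move=> e; have [] : (colsum y k)%:Z = (colsum z k)%:Z :> int by lia.
case: (posnP (j : nat)) => [h|h]; first by rewrite !Mt_total // ht.
have hj : (j : nat) = (j.-1).+1 by rewrite prednK.
by rewrite !(Mt_colsum _ hj) ht hc // -ltnS -hj.
Qed.

End FiberMargins.

Lemma total_sum (y : V) : total y = \sum_i y i.
Proof. by apply: eq_bigr => i _; rewrite muln1. Qed.

Lemma vpairC u v : vpair u v = vpair v u.
Proof. by apply/ffunP => i; rewrite !ffunE addnC. Qed.

Lemma vpairE u v i : vpair u v i = (i == u) + (i == v).
Proof. by rewrite !ffunE. Qed.

Lemma sum1_delta (y : V) : \sum_i y i = 1 -> exists a, y = delta a.
Proof.
move/eqP/sum_nat_eq1 => [a [_ ya y0]]; exists a; apply/ffunP => i; rewrite ffunE.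
by case: (eqVneq i a) => [->|ia]; [rewrite ya | rewrite y0].
Qed.

Lemma sum2_vpair (y : V) : \sum_i y i = 2 -> exists u v, y = vpair u v.
Proof.
move=> h.
have [a ha] : exists a : C, 0 < y a.
  apply: NNPP => hn; move: h; rewrite big1 // => i _; apply/eqP; rewrite -leqn0 leqNgt.
  by apply/negP => hi; apply: hn; exists i.
pose y1 : V := [ffun x => y x - (x == a)].
have [v hv] : exists v, y1 = delta v.
  apply: sum1_delta.
  have e1 : \sum_i y i = y a + \sum_(i | i != a) y i by rewrite (bigD1 a).
  have e2 : \sum_i y1 i = y1 a + \sum_(i | i != a) y1 i by rewrite (bigD1 a).
  have e3 : \sum_(i | i != a) y1 i = \sum_(i | i != a) y i.
    by apply: eq_bigr => i /negbTE hi; rewrite ffunE hi subn0.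
  have e4 : y1 a = y a - 1 by rewrite ffunE eqxx.
  by rewrite e2 e3 e4; rewrite e1 in h; lia.
exists a, v; apply/ffunP => x; move/ffunP/(_ x): hv; rewrite !ffunE => <-.
by case: (eqVneq x a) => [->|xa] /=; [rewrite addnC subnK | rewrite subn0].
Qed.

Lemma vpair_gt0 u v i : 0 < vpair u v i -> vpair u v = vpair i (if i == u then v else u).
Proof.
rewrite vpairE; case: (eqVneq i u) => [->|iu] //=.
by case: (eqVneq i v) => [->|//]; rewrite vpairC.
Qed.

Lemma same_margins_vpairI i v v' : same_margins (vpair i v) (vpair i v') -> v = v'.
Proof.
case=> _ h; apply: cell_bitP => k hk; move: (h k (ltnW hk)).
by rewrite /colsum !wsum_vpair => /addnI; case: (bit v k); case: (bit v' k).
Qed.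

Lemma same_margins_deg2_disjoint (a a' : V) : \sum_i a i = 2 -> \sum_i a' i = 2 ->
  same_margins a a' -> a != a' -> forall i, a i = 0 \/ a' i = 0.
Proof.
move=> h1 h2 sf ne i; case: (posnP (a i)) => [->|p1]; first by left.
case: (posnP (a' i)) => [->|p2]; first by right.
exfalso; move: ne; have [u [v e1]] := sum2_vpair h1; have [u' [v' e2]] := sum2_vpair h2.
rewrite e1 e2 in sf p1 p2 *; rewrite (vpair_gt0 p1) (vpair_gt0 p2) in sf *.
by rewrite (same_margins_vpairI sf) eqxx.
Qed.

(** * Degree 2 exchanges *)

Definition swap (y z : V) := exists r u v u' v',
  [/\ y = vadd r (vpair u v), z = vadd r (vpair u' v') & same_margins (vpair u v) (vpair u' v')].

Definition swap_reach := clos_refl_trans V swap.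

Lemma swap_same_margins y z : swap y z -> same_margins y z.
Proof. by case=> r [u [v [u' [v' [-> -> h]]]]]; apply: same_margins_vadd. Qed.

Lemma swap_reach_same_margins y z : swap_reach y z -> same_margins y z.
Proof.
elim=> [a b /swap_same_margins //| a | a b c _ h1 _ h2]; first exact: same_margins_refl.
exact: same_margins_trans h1 h2.
Qed.

Definition remove2 (y : V) (u v : C) : V := [ffun x => y x - (x == u) - (x == v)].
Definition exchange (y : V) (u v u' v' : C) := vadd (remove2 y u v) (vpair u' v').

Lemma remove2K (y : V) (u v : C) : u != v -> 0 < y u -> 0 < y v ->
  y = vadd (remove2 y u v) (vpair u v).
Proof.
move=> uv hu hv; apply/ffunP => x; rewrite !ffunE.
case: (eqVneq x u) => [->|xu]; first by rewrite (negbTE uv) /= subn0 addn0 subnK.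
by case: (eqVneq x v) => [->|xv] /=; rewrite ?subn0 ?addn0 ?add0n ?subnK.
Qed.

Lemma exchangeE (y : V) (u v u' v' x : C) :
  exchange y u v u' v' x = y x - (x == u) - (x == v) + (x == u') + (x == v').
Proof. by rewrite !ffunE addnA. Qed.

Lemma same_margins_flip2 (u v : C) k l : k != l -> k < n.+1 -> l < n.+1 ->
  bit u k != bit v k -> bit u l != bit v l ->
  same_margins (vpair u v) (vpair (flip2 k l u) (flip2 k l v)).
Proof.
move=> kl hk hl bk bl; split; first by rewrite /total !wsum_vpair.
move=> x hx; rewrite /colsum !wsum_vpair !bit_flip2 //.
case: (eqVneq x k) => [->|xk] /=; first by move: bk; case: (bit u k); case: (bit v k).
case: (eqVneq x l) => [->|xl] /=; first by move: bl; case: (bit u l); case: (bit v l).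
by rewrite !addbF.
Qed.

Lemma swap_flip2 (y : V) (u v : C) k l : u != v -> 0 < y u -> 0 < y v ->
  k != l -> k < n.+1 -> l < n.+1 -> bit u k != bit v k -> bit u l != bit v l ->
  swap y (exchange y u v (flip2 k l u) (flip2 k l v)) /\
  forall f, wsum (exchange y u v (flip2 k l u) (flip2 k l v)) f + (f u + f v)
            = wsum y f + (f (flip2 k l u) + f (flip2 k l v)).
Proof.
move=> uv hu hv kl hk hl bk bl; split.
  exists (remove2 y u v), u, v, (flip2 k l u), (flip2 k l v); split => //.
    exact: remove2K.
  exact: same_margins_flip2.
move=> f; rewrite {2}(remove2K uv hu hv) /exchange !wsum_vadd !wsum_delta; lia.
Qed.

(** * Prefix classes *)

Definition prefix (t : nat) (i : C) : C := [ffun m : 'I_n => (m < t) && i m].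
Definition prefix_count t (y : V) (g : C) := wsum y (fun x => prefix t x == prefix t g).
Definition prefix_bit_count t (y : V) (g : C) :=
  wsum y (fun x => (prefix t x == prefix t g) && bit x t).

Lemma prefix_flip2 t k l (i : C) : t <= k -> t <= l -> prefix t (flip2 k l i) = prefix t i.
Proof.
move=> hk hl; apply/ffunP => m; rewrite !ffunE.
case: (ltnP m t) => //= h.
by rewrite (ltn_eqF (leq_trans h hk)) (ltn_eqF (leq_trans h hl)) addbF.
Qed.

Lemma prefix_full (i : C) : prefix n i = i.
Proof. by apply/ffunP => m; rewrite ffunE ltn_ord. Qed.

Lemma prefix_id t (i : C) : prefix t (prefix t i) = prefix t i.
Proof. by apply/ffunP => m; rewrite !ffunE; case: (m < t). Qed.

Lemma eq_prefixS t (x g : C) : t < n ->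
  (prefix t.+1 x == prefix t.+1 g) = (prefix t x == prefix t g) && (bit x t == bit g t).
Proof.
move=> tn; have bt (z : C) : bit z t = z (Ordinal tn) by rewrite -bit_ord.
rewrite !bt; apply/eqP/andP.
  move=> h; split.
    apply/eqP/ffunP => m; rewrite !ffunE; case: (ltnP m t) => //= hm.
    by move/ffunP/(_ m): h; rewrite !ffunE ltnS (ltnW hm).
  by move/ffunP/(_ (Ordinal tn)): h; rewrite !ffunE /= ltnSn /= => ->.
case=> /eqP h /eqP h2; apply/ffunP => m; rewrite !ffunE ltnS leq_eqVlt.
case: (eqVneq (val m) t) => [e|ne] /=; first by have -> : m = Ordinal tn by apply: val_inj.
by move/ffunP/(_ m): h; rewrite !ffunE.
Qed.

Lemma sum_prefix_classes t (y : V) (P : C -> bool) :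
  \sum_(g | prefix t g == g) wsum y (fun x => (prefix t x == prefix t g) && P x) = wsum y P.
Proof.
rewrite /wsum exchange_big /=; apply: eq_bigr => x _.
rewrite -big_distrr /=; congr (_ * _).
rewrite (@eq_bigr _ _ _ _ _ _ _ (fun g => ((g == prefix t x) && P x : nat))); last first.
  move=> g /eqP hg; rewrite hg; congr (nat_of_bool (_ && _)).
  by apply/eqP/eqP => [<-|->]; rewrite ?hg ?prefix_id.
rewrite (bigD1 (prefix t x)) ?prefix_id //= eqxx big1 ?addn0 //.
by move=> g /andP[_ /negbTE ->].
Qed.

Lemma coord_prefix t (x : C) k : coord (prefix t x) k = (k < t) && coord x k.
Proof.
case: (ltnP k n) => h; last by rewrite !coord_ge // andbF.
by have -> : k = Ordinal h by []; rewrite !coord_ord ffunE.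
Qed.

Lemma odd_suffix_sum t (x : C) : t < n ->
  odd (\sum_(t.+1 <= k < n.+1) bit x k) = parity (prefix t x) (+) bit x t.
Proof.
move=> tn; have := even_sum_bit x.
rewrite (@big_cat_nat _ _ _ t) //= ?(leq_trans (ltnW tn)) //.
rewrite [\sum_(t <= i < n.+1) _]big_ltn ?ltnS ?(ltnW tn) //.
have -> : \sum_(0 <= k < t) bit x k = \sum_(0 <= k < n) coord (prefix t x) k.
  rewrite (@big_cat_nat _ _ _ t 0 n) //= ?(ltnW tn) //.
  rewrite [X in _ = _ + X]big1_seq ?addn0; last first.
    by move=> k /andP[_]; rewrite mem_index_iota => /andP[h _]; rewrite coord_prefix ltnNge h.
  apply: eq_big_nat => k /andP[_ h].
  by rewrite coord_prefix h /bit (ltn_trans h tn).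
rewrite /parity !oddD oddb.
by case: (odd (\sum_(0 <= k < n) _)); case: (odd (\sum_(t.+1 <= k < n.+1) _)); case: (bit x t).
Qed.

Lemma prefix_bit_count_eq t (y : V) g g' :
  prefix t g = prefix t g' -> prefix_bit_count t y g = prefix_bit_count t y g'.
Proof. by rewrite /prefix_bit_count => ->. Qed.

Lemma prefix_count_eq t (y : V) g g' :
  prefix t g = prefix t g' -> prefix_count t y g = prefix_count t y g'.
Proof. by rewrite /prefix_count => ->. Qed.

Lemma prefix_bit_count_le t (y : V) g : prefix_bit_count t y g <= prefix_count t y g.
Proof. by apply: leq_wsum => x; case: (_ == _); case: (bit x t). Qed.

Lemma prefix_count_split t (y : V) g : prefix_count t y g =
  prefix_bit_count t y g + wsum y (fun x => (prefix t x == prefix t g) && ~~ bit x t).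
Proof. exact: (wsum_split y (fun x => prefix t x == prefix t g) (fun x => bit x t)). Qed.

(** * Connectivity of the fibers *)

Definition same_prefixes t (y z : V) := forall g, prefix_count t y g = prefix_count t z g.
Definition bit_discrepancy t (y z : V) :=
  \sum_g ((prefix_bit_count t y g - prefix_bit_count t z g) +
          (prefix_bit_count t z g - prefix_bit_count t y g)).
Definition discrepancy_reducible t (y z : V) := exists y1,
  [/\ swap_reach y y1, same_margins y1 z, same_prefixes t y1 z &
      bit_discrepancy t y1 z < bit_discrepancy t y z].
Definition suffix_dist t (w u : C) := \sum_(t.+1 <= k < n.+1) (bit w k != bit u k).

Lemma surplus_word t (y z : V) g : prefix_bit_count t z g < prefix_bit_count t y g ->
  exists u, [/\ 0 < y u, bit u t, prefix t u = prefix t g &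
                 prefix_bit_count t z u < prefix_bit_count t y u].
Proof.
move=> h; have : 0 < prefix_bit_count t y g by lia.
case/wsum_gt0 => u [hu]; rewrite lt0b => /andP[/eqP e bu].
by exists u; split => //; rewrite !(prefix_bit_count_eq _ e).
Qed.

Lemma deficit_word t (y z : V) g : same_prefixes t y z ->
  prefix_bit_count t y g < prefix_bit_count t z g ->
  exists v, [/\ 0 < y v, ~~ bit v t, prefix t v = prefix t g &
                 prefix_bit_count t y v < prefix_bit_count t z v].
Proof.
move=> eqp h.
have : 0 < wsum y (fun x => (prefix t x == prefix t g) && ~~ bit x t).
  have := prefix_count_split t y g; have := prefix_bit_count_le t z g; rewrite eqp; lia.
case/wsum_gt0 => v [hv]; rewrite lt0b => /andP[/eqP e bv].
by exists v; split => //; rewrite !(prefix_bit_count_eq _ e).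
Qed.

Lemma surplus_deficit_classes t (y z : V) : t < n.+1 -> same_margins y z ->
  0 < bit_discrepancy t y z -> exists gp gn,
  prefix_bit_count t z gp < prefix_bit_count t y gp /\
  prefix_bit_count t y gn < prefix_bit_count t z gn.
Proof.
move=> tn [_ hc] hE.
have [g0 hg0] : exists g0, prefix_bit_count t y g0 != prefix_bit_count t z g0.
  apply: NNPP => hn; move: hE; rewrite /bit_discrepancy big1 // => g _.
  have -> : prefix_bit_count t y g = prefix_bit_count t z g.
    by apply: NNPP => hh; apply: hn; exists g; apply/eqP.
  by rewrite subnn.
have sumE : \sum_(g | prefix t g == g) prefix_bit_count t y g =
            \sum_(g | prefix t g == g) prefix_bit_count t z g.
  by rewrite !(sum_prefix_classes t _ (fun x => bit x t)); apply: hc.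
have r0 : prefix t (prefix t g0) == prefix t g0 by rewrite prefix_id.
have e0 y0 : prefix_bit_count t y0 (prefix t g0) = prefix_bit_count t y0 g0.
  by apply: prefix_bit_count_eq; rewrite prefix_id.
case: (ltngtP (prefix_bit_count t y g0) (prefix_bit_count t z g0)) hg0 => // h _.
  have [|gp _ hp] := eq_sum_ltn_exists sumE r0; first by rewrite !e0.
  by exists gp, g0.
have [|gn _ hn] := eq_sum_ltn_exists (esym sumE) r0; first by rewrite !e0.
by exists g0, gn.
Qed.

(* Flipping bit t and a later bit k of a surplus word u and a deficit word v moves
   one unit of bit t from the class of u to the class of v. *)
Lemma discrepancy_swap t (y z : V) (u v : C) k : t < n -> same_margins y z ->
  same_prefixes t y z -> 0 < y u -> 0 < y v -> bit u t -> ~~ bit v t ->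
  prefix_bit_count t z u < prefix_bit_count t y u ->
  prefix_bit_count t y v < prefix_bit_count t z v ->
  t < k -> k < n.+1 -> bit u k != bit v k ->
  discrepancy_reducible t y z.
Proof.
move=> tn sf eqp hu hv but bvt pu nv tk kn bk.
have uv : u != v by apply/eqP => e; move: but bvt; rewrite e => ->.
have tk' : t != k by rewrite neq_ltn tk.
have tn1 : t < n.+1 by apply: ltnW.
have bt : bit u t != bit v t by rewrite but (negbTE bvt).
have [st W] := swap_flip2 uv hu hv tk' tn1 kn bt bk.
set y1 := exchange _ _ _ _ _ in st W *.
have bu' : bit (flip2 t k u) t = false by rewrite bit_flip2 // eqxx but.
have bv' : bit (flip2 t k v) t = true by rewrite bit_flip2 // eqxx (negbTE bvt).
have ru : prefix t (flip2 t k u) = prefix t u by apply: prefix_flip2 => //; apply: ltnW.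
have rv : prefix t (flip2 t k v) = prefix t v by apply: prefix_flip2 => //; apply: ltnW.
have moved g : prefix_bit_count t y1 g + (prefix t u == prefix t g) =
               prefix_bit_count t y g + (prefix t v == prefix t g).
  move: (W (fun x => (prefix t x == prefix t g) && bit x t)).
  rewrite ru rv bu' bv' but (negbTE bvt) !andbT !andbF !addn0 !add0n => ->.
  by rewrite addnC.
have nuv : prefix t u != prefix t v.
  apply/eqP => e; move: pu nv.
  by rewrite (prefix_bit_count_eq y e) (prefix_bit_count_eq z e); lia.
exists y1; split.
- exact: rt_step.
- exact: same_margins_trans (same_margins_sym (swap_same_margins st)) sf.
- move=> g; rewrite -eqp /prefix_count; move: (W (fun x => prefix t x == prefix t g)).
  by rewrite ru rv => /addIn.
rewrite /bit_discrepancy; apply: (@ltn_sum_witness _ xpredT _ _ u) => // [g _|]; last first.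
  by move: (moved u) pu; rewrite eqxx eq_sym (negbTE nuv) /=; lia.
case: (eqVneq (prefix t u) (prefix t g)) => [e|hru].
  move: (moved g) pu; rewrite e eqxx; rewrite -e eq_sym (negbTE nuv).
  by rewrite (prefix_bit_count_eq y e) (prefix_bit_count_eq z e) /=; lia.
case: (eqVneq (prefix t v) (prefix t g)) => [e|hrv].
  move: (moved g) nv; rewrite (negbTE hru) e eqxx.
  by rewrite (prefix_bit_count_eq y e) (prefix_bit_count_eq z e) /=; lia.
by move: (moved g); rewrite (negbTE hru) (negbTE hrv) /= !addn0 => ->.
Qed.

Lemma suffix_swap t (y z : V) (u w : C) k l : same_margins y z -> same_prefixes t y z ->
  0 < y u -> 0 < y w -> u != w -> k != l -> t < k -> t < l -> k < n.+1 -> l < n.+1 ->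
  bit u k != bit w k -> bit u l != bit w l ->
  let y2 := exchange y u w (flip2 k l u) (flip2 k l w) in
  [/\ swap_reach y y2, same_margins y2 z, same_prefixes t y2 z,
      (forall g, prefix_bit_count t y2 g = prefix_bit_count t y g) &
      (0 < y2 (flip2 k l u) /\ forall x, x != u -> x != w -> y x <= y2 x)].
Proof.
move=> sf eqp hu hw uw kl tk tl kn ln bk bl y2.
have [st W] := swap_flip2 uw hu hw kl kn ln bk bl.
have tn1 : t < n.+1 by apply: ltn_trans tk kn.
have tkl : ((t == k) || (t == l)) = false by rewrite (ltn_eqF tk) (ltn_eqF tl).
have bu' : bit (flip2 k l u) t = bit u t by rewrite bit_flip2 // tkl addbF.
have bw' : bit (flip2 k l w) t = bit w t by rewrite bit_flip2 // tkl addbF.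
have ru : prefix t (flip2 k l u) = prefix t u by apply: prefix_flip2; apply: ltnW.
have rw : prefix t (flip2 k l w) = prefix t w by apply: prefix_flip2; apply: ltnW.
split.
- exact: rt_step.
- exact: same_margins_trans (same_margins_sym (swap_same_margins st)) sf.
- move=> g; rewrite -eqp /prefix_count; move: (W (fun x => prefix t x == prefix t g)).
  by rewrite ru rw => /addIn.
- move=> g; rewrite /prefix_bit_count.
  move: (W (fun x => (prefix t x == prefix t g) && bit x t)).
  by rewrite ru rw bu' bw' => /addIn.
split; first by rewrite /y2 exchangeE eqxx /= addn1 ltnS leq_addr.
move=> x xu xw; rewrite /y2 exchangeE (negbTE xu) (negbTE xw) /= !subn0 -addnA.
exact: leq_addr.
Qed.

Lemma odd_suffix_dist t (w u : C) : t < n ->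
  odd (suffix_dist t w u) = (parity (prefix t w) (+) bit w t) (+) (parity (prefix t u) (+) bit u t).
Proof.
move=> tn; rewrite /suffix_dist.
under eq_bigr do rewrite negb_eqb.
by rewrite odd_sum_addb !odd_suffix_sum.
Qed.

Lemma same_margins_wsum_suffix_dist t (y z : V) u : same_margins y z ->
  wsum y (fun w => suffix_dist t w u) = wsum z (fun w => suffix_dist t w u).
Proof.
move=> sf; have wsum_dist (y0 : V) : wsum y0 (fun w => suffix_dist t w u) =
    \sum_(t.+1 <= k < n.+1) wsum y0 (fun w => bit w k != bit u k).
  by rewrite /wsum /suffix_dist; under eq_bigr do rewrite big_distrr; apply: exchange_big.
rewrite !wsum_dist; apply: eq_big_nat => k /andP[_ kn]; exact: wsum_bit_neq.
Qed.

Lemma wsum_parity_bit t (y : V) c :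
  wsum y (fun w => parity (prefix t w) (+) bit w t (+) c) =
  \sum_(g | prefix t g == g) (if parity (prefix t g) (+) c
     then prefix_count t y g - prefix_bit_count t y g else prefix_bit_count t y g).
Proof.
rewrite -(sum_prefix_classes t y); apply: eq_bigr => g _.
have -> : wsum y (fun x => (prefix t x == prefix t g) &&
                           (parity (prefix t x) (+) bit x t (+) c)) =
          wsum y (fun x => (prefix t x == prefix t g) && ((parity (prefix t g) (+) c) (+) bit x t)).
  by apply: eq_bigr => x _; case: eqP => //= ->; rewrite addbAC.
case: (parity (prefix t g) (+) c).
  by rewrite prefix_count_split addKn; apply: eq_bigr => x _; rewrite addTb.
by apply: eq_bigr => x _; rewrite addFb.
Qed.

(* Were every word of y within suffix distance 1 of u, the suffix distance would equal
   its parity on y. By the separation of prefix parities, summing that parity class by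
   class gives strictly less on y than on z, whereas the distance sums agree. *)
Lemma suffix_far_word t (y z : V) (u gn : C) : t < n -> same_margins y z ->
  same_prefixes t y z -> 0 < y u -> bit u t ->
  prefix_bit_count t z u < prefix_bit_count t y u ->
  prefix_bit_count t y gn < prefix_bit_count t z gn ->
  (forall g1 g2, prefix_bit_count t z g1 < prefix_bit_count t y g1 ->
     prefix_bit_count t y g2 < prefix_bit_count t z g2 ->
     parity (prefix t g1) != parity (prefix t g2)) ->
  exists w, 0 < y w /\ 1 < suffix_dist t w u.
Proof.
move=> tn sf eqp hu but pu nn sep; apply: NNPP => hn.
pose c := ~~ parity (prefix t u).
have oddE w : odd (suffix_dist t w u) = parity (prefix t w) (+) bit w t (+) c.
  by rewrite odd_suffix_dist // but /c addbT.
have wsum_oddE (y0 : V) : wsum y0 (fun w => odd (suffix_dist t w u)) =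
    wsum y0 (fun w => parity (prefix t w) (+) bit w t (+) c).
  by apply: eq_bigr => w _; rewrite oddE.
have Ey : wsum y (fun w => odd (suffix_dist t w u)) = wsum y (fun w => suffix_dist t w u).
  apply: eq_wsum => w hw; have : suffix_dist t w u <= 1.
    by rewrite leqNgt; apply/negP => h; apply: hn; exists w.
  by case: (suffix_dist t w u) => [|[|]].
have Ez : wsum z (fun w => odd (suffix_dist t w u)) <= wsum z (fun w => suffix_dist t w u).
  by apply: leq_wsum => w; case: (suffix_dist t w u) => [|d] //=; case: (odd _).
have : wsum y (fun w => odd (suffix_dist t w u)) < wsum z (fun w => odd (suffix_dist t w u)).
  rewrite !wsum_oddE !wsum_parity_bit; apply: (@ltn_sum_witness _ _ _ _ (prefix t u)).
  - move=> g _; case s: (parity (prefix t g) (+) c).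
      have : prefix_bit_count t z g <= prefix_bit_count t y g.
        rewrite leqNgt; apply/negP => ng; move: (sep u g pu ng) s; rewrite /c.
        by case: (parity (prefix t g)); case: (parity (prefix t u)).
      have := prefix_bit_count_le t y g; have := prefix_bit_count_le t z g; rewrite (eqp g); lia.
    rewrite leqNgt; apply/negP => pg; move: (sep g gn pg nn) (sep u gn pu nn) s; rewrite /c.
    by case: (parity (prefix t g)); case: (parity (prefix t u)); case: (parity (prefix t gn)).
  - by rewrite prefix_id.
  rewrite prefix_id /c addbN addbb /= !(prefix_count_eq _ (prefix_id t u)).
  rewrite !(prefix_bit_count_eq _ (prefix_id t u)).
  have := prefix_bit_count_le t y u; have := prefix_bit_count_le t z u; rewrite (eqp u); lia.
rewrite Ey (same_margins_wsum_suffix_dist t u sf); lia.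
Qed.

Lemma discrepancy_reducible_matching t (y z : V) g1 g2 : t < n -> same_margins y z ->
  same_prefixes t y z -> prefix_bit_count t z g1 < prefix_bit_count t y g1 ->
  prefix_bit_count t y g2 < prefix_bit_count t z g2 ->
  parity (prefix t g1) = parity (prefix t g2) -> discrepancy_reducible t y z.
Proof.
move=> tn sf eqp p1 n2 pe.
have [u [hu bu ru pu]] := surplus_word p1.
have [v [hv bv rv nv]] := deficit_word eqp n2.
have [k [k1 k2 bk]] : exists k, [/\ t.+1 <= k, k < n.+1 & bit u k != bit v k].
  apply: odd_sum_neq_exists; rewrite !odd_suffix_sum // ru rv pe bu (negbTE bv).
  by case: (parity _).
exact: (discrepancy_swap tn sf eqp hu hv bu bv pu nv k1 k2 bk).
Qed.

(* When u and v agree after t, a suffix swap of u with a far word w first makes them differ. *)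
Lemma discrepancy_reducible_separated t (y z : V) gp gn : t < n -> same_margins y z ->
  same_prefixes t y z -> prefix_bit_count t z gp < prefix_bit_count t y gp ->
  prefix_bit_count t y gn < prefix_bit_count t z gn ->
  (forall g1 g2, prefix_bit_count t z g1 < prefix_bit_count t y g1 ->
     prefix_bit_count t y g2 < prefix_bit_count t z g2 ->
     parity (prefix t g1) != parity (prefix t g2)) ->
  discrepancy_reducible t y z.
Proof.
move=> tn sf eqp pg ng sep.
have [u [hu bu ru pu]] := surplus_word pg.
have [v [hv bv rv nv]] := deficit_word eqp ng.
case: (classic (exists k, [/\ t < k, k < n.+1 & bit u k != bit v k])) => [[k [k1 k2 bk]]|nok].
  exact: (discrepancy_swap tn sf eqp hu hv bu bv pu nv k1 k2 bk).
have agree k : t < k -> k < n.+1 -> bit u k = bit v k.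
  by move=> h1 h2; apply: NNPP => hh; apply: nok; exists k; split => //; apply/eqP.
have [w [hw]] := suffix_far_word tn sf eqp hu bu pu ng sep.
case/sum_index_iota_gt1 => k [l [kl /andP[k1 k2] /andP[l1 l2] bk bl]].
have uw : u != w by apply/eqP => e; move: bk; rewrite e eqxx.
have bk' : bit u k != bit w k by rewrite eq_sym.
have bl' : bit u l != bit w l by rewrite eq_sym.
have [r2 sf2 eqp2 eb2 [hu2 hge]] := suffix_swap sf eqp hu hw uw kl k1 l1 k2 l2 bk' bl'.
set y2 := exchange _ _ _ _ _ in r2 sf2 eqp2 eb2 hu2 hge.
have vu : v != u by apply/eqP => e; move: bu bv; rewrite e => ->.
have vw : v != w by apply/eqP => e; move: bk; rewrite (agree k k1 k2) e eqxx.
have hv2 : 0 < y2 v by apply: leq_trans hv (hge v vu vw).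
have ru2 : prefix t (flip2 k l u) = prefix t u by apply: prefix_flip2; apply: ltnW.
have bu2 : bit (flip2 k l u) t.
  by rewrite bit_flip2 ?(ltn_eqF k1) ?(ltn_eqF l1) ?addbF //; apply: ltn_trans k2.
have pu2 : prefix_bit_count t z (flip2 k l u) < prefix_bit_count t y2 (flip2 k l u).
  by rewrite eb2 !(prefix_bit_count_eq _ ru2).
have nv2 : prefix_bit_count t y2 v < prefix_bit_count t z v by rewrite eb2.
have bk2 : bit (flip2 k l u) k != bit v k.
  by rewrite bit_flip2 // eqxx -(agree k k1 k2); case: (bit u k).
have [y1 [r1 sf1 eqp1 lt1]] := discrepancy_swap tn sf2 eqp2 hu2 hv2 bu2 bv pu2 nv2 k1 k2 bk2.
exists y1; split => //; first exact: rt_trans r2 r1.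
suff -> : bit_discrepancy t y z = bit_discrepancy t y2 z by [].
by apply: eq_bigr => g _; rewrite eb2.
Qed.

Lemma discrepancy_descent t (y z : V) : t < n -> same_margins y z ->
  same_prefixes t y z -> 0 < bit_discrepancy t y z -> discrepancy_reducible t y z.
Proof.
move=> tn sf eqp hE.
have [gp [gn [pg ng]]] := surplus_deficit_classes (ltnW tn) sf hE.
case: (classic (exists g1 g2, [/\ prefix_bit_count t z g1 < prefix_bit_count t y g1,
    prefix_bit_count t y g2 < prefix_bit_count t z g2 &
    parity (prefix t g1) = parity (prefix t g2)])) => [[g1 [g2 [p1 n2 pe]]]|hnot].
  exact: discrepancy_reducible_matching tn sf eqp p1 n2 pe.
apply: discrepancy_reducible_separated tn sf eqp pg ng _ => g1 g2 h1 h2.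
by apply/eqP => e; apply: hnot; exists g1, g2.
Qed.

Lemma same_prefixes0 (y z : V) : same_margins y z -> same_prefixes 0 y z.
Proof.
case=> ht _ g; rewrite /prefix_count.
have e (y0 : V) : wsum y0 (fun x => prefix 0 x == prefix 0 g) = total y0.
  apply: eq_bigr => x _.
  have -> : prefix 0 x = prefix 0 g by apply/ffunP => m; rewrite !ffunE.
  by rewrite eqxx.
by rewrite !e.
Qed.

Lemma same_prefixesS t (y z : V) : t < n -> same_prefixes t y z ->
  bit_discrepancy t y z = 0 -> same_prefixes t.+1 y z.
Proof.
move=> tn eqp hE g.
have ebe g' : prefix_bit_count t y g' = prefix_bit_count t z g'.
  by move: hE; rewrite /bit_discrepancy (bigD1 g') //=; lia.
have e (y0 : V) : prefix_count t.+1 y0 g = if bit g t then prefix_bit_count t y0 g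
    else wsum y0 (fun x => (prefix t x == prefix t g) && ~~ bit x t).
  rewrite /prefix_count /prefix_bit_count; case hb: (bit g t);
    by apply: eq_bigr => x _; rewrite eq_prefixS // hb; case: (bit x t); rewrite ?andbT ?andbF.
rewrite !e; case: (bit g t); first exact: ebe.
have := prefix_count_split t y g; have := prefix_count_split t z g; rewrite (eqp g) (ebe g); lia.
Qed.

Lemma same_prefixes_full (y z : V) : same_prefixes n y z -> y = z.
Proof.
move=> h; apply/ffunP => g; move: (h g); rewrite /prefix_count.
have e (y0 : V) : wsum y0 (fun x => prefix n x == prefix n g) = wsum y0 (fun x => x == g).
  by apply: eq_bigr => x _; rewrite !prefix_full.
by rewrite !e !wsum_eq1.
Qed.

Lemma same_prefixes_step t (y z : V) : t < n -> same_margins y z -> same_prefixes t y z ->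
  exists2 y1, swap_reach y y1 & same_margins y1 z /\ same_prefixes t.+1 y1 z.
Proof.
move=> tn; have [m] : exists m, bit_discrepancy t y z <= m by exists (bit_discrepancy t y z).
elim: m y => [|m IH] y hE sf eqp; case: (posnP (bit_discrepancy t y z)) => h0.
- by exists y; [apply: rt_refl | split => //; apply: same_prefixesS].
- by move: hE; rewrite leqn0 => /eqP h; rewrite h in h0.
- by exists y; [apply: rt_refl | split => //; apply: same_prefixesS].
have [y1 [r1 sf1 eqp1 lt1]] := discrepancy_descent tn sf eqp h0.
have [|y2 r2 h2] := IH y1 _ sf1 eqp1; first by rewrite -ltnS; apply: leq_trans lt1 hE.
by exists y2 => //; apply: rt_trans r1 r2.
Qed.

Lemma swap_reach_same_prefixes t (y z : V) : t <= n -> same_margins y z ->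
  exists2 y1, swap_reach y y1 & same_margins y1 z /\ same_prefixes t y1 z.
Proof.
move=> + sf; elim: t => [_|t IH tn].
  by exists y; [apply: rt_refl | split; last apply: same_prefixes0].
have [y1 r1 [sf1 eqp1]] := IH (ltnW tn).
have [y2 r2 h2] := same_prefixes_step tn sf1 eqp1.
by exists y2 => //; apply: rt_trans r1 r2.
Qed.

Theorem same_margins_swap_reach (y z : V) : same_margins y z -> swap_reach y z.
Proof.
move=> sf; have [y1 r1 [_ eqp]] := swap_reach_same_prefixes (leqnn n) sf.
by rewrite -(same_prefixes_full eqp).
Qed.

(** * The Markov basis and its minimality *)

Section Moves.
Local Open Scope ring_scope.

Definition pos_part (w : zvec n.+1) : V := [ffun i => if w i is Posz k then k else 0%N].

Lemma pos_part_diff (a a' : V) : (forall i, a i = 0%N \/ a' i = 0%N) ->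
  pos_part (toZ a' - toZ a) = a'.
Proof.
move=> h; apply/ffunP => i; rewrite !ffunE.
by case: (h i) => ->; [rewrite subr0 | rewrite sub0r; case: (a i)].
Qed.

Lemma MtB (z1 z2 : zvec n.+1) j : Mt (z1 - z2) j = Mt z1 j - Mt z2 j.
Proof. by rewrite /Mt -sumrB; apply: eq_bigr => i _; rewrite !ffunE mulrBr. Qed.

Lemma Mt_vadd (a b : V) j : Mt (toZ (vadd a b)) j = Mt (toZ a) j + Mt (toZ b) j.
Proof. by rewrite /Mt -big_split; apply: eq_bigr => i _; rewrite !ffunE PoszD mulrDr. Qed.

Lemma toZ_vaddBl (r a b : V) : toZ (vadd r b) - toZ (vadd r a) = toZ b - toZ a.
Proof. by apply/ffunP => i; rewrite !ffunE PoszD; lia. Qed.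

Lemma toZ_inj : injective (@toZ n.+1).
Proof. by move=> a b /ffunP h; apply/ffunP => i; move: (h i); rewrite !ffunE => -[]. Qed.

End Moves.

Lemma inFiber_deg2 (b y : V) : deg2 b -> inFiber b y -> deg2 y.
Proof. by rewrite /deg2 => hb /inFiberE[ht _]; rewrite -total_sum -ht total_sum. Qed.

Lemma inFiber_deg2_disjoint (b x y : V) : deg2 b -> inFiber b x -> inFiber b y -> x != y ->
  forall i, x i = 0 \/ y i = 0.
Proof.
move=> db hx hy; apply: same_margins_deg2_disjoint; try exact: (inFiber_deg2 db).
exact: same_margins_trans (same_margins_sym (proj1 (inFiberE _ _) hx)) (proj1 (inFiberE _ _) hy).
Qed.

Lemma fiber_set_exists (b : V) : deg2 b -> exists S : {fset V}, fiber_set b S.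
Proof.
move=> db; exists (seq_fset tt [seq x <- allpairs vpair (enum C) (enum C) |
                                  [forall j, Mt (toZ x) j == Mt (toZ b) j]]).
move=> y; rewrite seq_fsetE mem_filter; split.
  by case/andP => /forallP h _ j; apply/eqP.
move=> hy; apply/andP; split; first by apply/forallP => j; apply/eqP.
have [u [v ->]] := sum2_vpair (inFiber_deg2 db hy).
by apply: allpairs_f; rewrite mem_enum.
Qed.

Section Basis.
Local Open Scope ring_scope.
Local Open Scope fset_scope.
Variable Bsel : V -> {fset zvec n.+1}.
Hypothesis Bsel_fiber : forall b b', deg2 b -> inFiber b b' -> Bsel b = Bsel b'.
Hypothesis Bsel_spec : forall b, deg2 b -> nontrivial_fiber b ->
  [/\ forall S : {fset V}, fiber_set b S -> #|` Bsel b| = (#|` S| - 1)%N,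
      forall z, z \in Bsel b -> exists x y, [/\ inFiber b x, inFiber b y & z = toZ x - toZ y]
    & gconnected (Bsel b) b].
Variable B : {fset zvec n.+1}.
Hypothesis B_union : forall z, z \in B <->
  exists b, [/\ deg2 b, nontrivial_fiber b & z \in Bsel b].

Lemma B_moves z : z \in B -> is_move z.
Proof.
case/B_union => b [db nb zb]; have [_ hd _] := Bsel_spec db nb.
have [x [y [hx hy ->]]] := hd z zb.
by move=> j; rewrite MtB hx hy subrr.
Qed.

(* A swap is a move of the degree 2 fiber of its exchanged pair, which Bsel connects. *)
Lemma swap_connected (b y y' : V) : swap y y' -> inFiber b y ->
  clos_refl_trans V (gedge B b) y y'.
Proof.
case=> r [u [v [u' [v' [ey ey' sf]]]]] hb.
case: (eqVneq (vpair u v) (vpair u' v')) => [e|ne]; first by rewrite ey ey' e; apply: rt_refl.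
have dc : deg2 (vpair u v) by rewrite /deg2 -total_sum /total wsum_vpair.
have nc : nontrivial_fiber (vpair u v).
  by exists (vpair u' v'); split; [apply/inFiberE | apply/eqP; rewrite eq_sym].
have [_ _ gc] := Bsel_spec dc nc.
have := gc (vpair u v) (vpair u' v') (fun j => erefl) (proj2 (inFiberE _ _) sf).
rewrite ey ey'; elim=> [x1 x2 [h1 h2 hm]| x1 | x1 x2 x3 _ c1 _ c2].
- apply: rt_step; split; try by move=> j; rewrite Mt_vadd ?h1 ?h2 -Mt_vadd -ey hb.
  by rewrite !toZ_vaddBl; case: hm => h; [left | right]; apply/B_union; exists (vpair u v).
- exact: rt_refl.
- exact: rt_trans c1 c2.
Qed.

Lemma swap_reach_connected (b y y' : V) : swap_reach y y' -> inFiber b y ->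
  clos_refl_trans V (gedge B b) y y'.
Proof.
elim=> [x1 x2 st|x1|x1 x2 x3 r1 IH1 r2 IH2] hb.
- exact: swap_connected st hb.
- exact: rt_refl.
apply: rt_trans (IH1 hb) (IH2 _).
have [ht hc] := swap_reach_same_margins r1.
by apply/inFiberE; apply: same_margins_trans (proj1 (inFiberE _ _) hb) _; split.
Qed.

Lemma B_markov : markov_basis B.
Proof.
split=> [|b x y hx hy]; first exact: B_moves.
apply: (swap_reach_connected _ hx); apply: same_margins_swap_reach.
by apply/inFiberE => j; rewrite hx hy.
Qed.

(* Distinct elements of a degree 2 fiber have disjoint supports, so a move
   x - y of B recovers x and y, hence also the fiber whose Bsel contains it. *)
Lemma B_diff_in_Bsel (b0 a a' : V) : deg2 b0 -> inFiber b0 a -> inFiber b0 a' ->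
  a != a' -> toZ a' - toZ a \in B -> toZ a' - toZ a \in Bsel b0.
Proof.
move=> d0 ha ha' ne /B_union[b1 [d1 n1 w1]].
have [_ hd _] := Bsel_spec d1 n1.
have [x1 [y1 [hx1 hy1 e1]]] := hd _ w1.
have nxy : x1 != y1.
  apply: contra ne => /eqP e; move: e1; rewrite e subrr => /eqP; rewrite subr_eq0.
  by move=> /eqP/toZ_inj ->.
have dj1 i : y1 i = 0%N \/ x1 i = 0%N.
  by case: (inFiber_deg2_disjoint d1 hx1 hy1 nxy i); [right | left].
have dj i : a i = 0%N \/ a' i = 0%N := inFiber_deg2_disjoint d0 ha ha' ne i.
have ex : x1 = a' by rewrite -(pos_part_diff dj1) -e1 pos_part_diff.
by rewrite -(Bsel_fiber d1 (b' := b0)) // => j; rewrite -ha' -ex hx1.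
Qed.

Definition move_edges (M : {fset zvec n.+1}) : seq (V * V) :=
  [seq (pos_part w, pos_part (- w)) | w <- M].

Lemma joined_move_edges M (a a' : V) : (forall i, a i = 0%N \/ a' i = 0%N) ->
  toZ a' - toZ a \in M -> joined (move_edges M) a a'.
Proof.
move=> dj hw; exists (a', a); last by rewrite /= !eqxx orbT.
have dj' i : a' i = 0%N \/ a i = 0%N by case: (dj i); [right | left].
have -> : (a', a) = (pos_part (toZ a' - toZ a), pos_part (- (toZ a' - toZ a))).
  by rewrite opprB !pos_part_diff.
exact: map_f.
Qed.

Lemma gedge_joined (B' : {fset zvec n.+1}) (b0 a a' : V) : deg2 b0 -> B' `<=` B ->
  gedge B' b0 a a' -> a != a' -> joined (move_edges (Bsel b0 `&` B')) a a'.
Proof.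
move=> d0 sub [ha ha' hm] ne.
have dj i : a i = 0%N \/ a' i = 0%N := inFiber_deg2_disjoint d0 ha ha' ne i.
have dj' i : a' i = 0%N \/ a i = 0%N by case: (dj i); [right | left].
case: hm => hw.
  apply: joined_move_edges dj _; rewrite in_fsetI hw andbT.
  exact: B_diff_in_Bsel (fsubsetP sub _ hw).
apply/joined_sym/joined_move_edges => //; rewrite in_fsetI hw andbT.
by apply: B_diff_in_Bsel (fsubsetP sub _ hw); rewrite // eq_sym.
Qed.

Lemma B_minimal (B' : {fset zvec n.+1}) : B' `<` B -> ~ markov_basis B'.
Proof.
move=> prop [_ conn']; have := prop; rewrite fproperE => /andP[sub /fsubsetPn[z zB zB']].
have [b0 [d0 n0 z0]] := proj1 (B_union z) zB.
have [hcard _ _] := Bsel_spec d0 n0.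
have [S hS] := fiber_set_exists d0.
have : (#|` S| <= #|` [fset b0]| + size (move_edges (Bsel b0 `&` B')))%N.
  set es := move_edges _.
  apply: card_reachable_le => x /hS hx; exists b0; first by rewrite in_fset1.
  elim: (conn' b0 b0 x (fun j => erefl) hx) => [x1 x2 e|x1|x1 x2 x3 _ c1 _ c2].
  - case: (eqVneq x1 x2) => [->|ne]; first exact: rt_refl.
    by apply: rt_step; apply: (gedge_joined d0 sub e ne).
  - exact: rt_refl.
  - exact: rt_trans c1 c2.
have : (#|` Bsel b0 `&` B'| < #|` Bsel b0|)%N.
  apply: fproper_ltn_card; rewrite fproperE fsubsetIl; apply/fsubsetPn.
  by exists z; rewrite // in_fsetI negb_and zB' orbT.
have : (0 < #|` S|)%N by rewrite (cardfsD1 b0) (_ : b0 \in S) //; apply/hS.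
rewrite cardfs1 size_map (hcard S hS); set a := #|` Bsel b0 `&` B'|; lia.
Qed.

End Basis.

End Fibers.

Unset Implicit Arguments.
Local Open Scope ring_scope.
Local Open Scope fset_scope.

Theorem corollary1 (p : nat) (hp : (2 <= p)%N)
  (Bsel : nvec p -> {fset zvec p})
  (Hfib : forall b b', deg2 b -> inFiber b b' -> Bsel b = Bsel b')
  (Hsel : forall b, deg2 b -> nontrivial_fiber b ->
     [/\ forall S : {fset nvec p}, fiber_set b S -> #|` Bsel b| = (#|` S| - 1)%N,
         forall z, z \in Bsel b ->
           exists x y, [/\ inFiber b x, inFiber b y & z = toZ x - toZ y]
       & gconnected (Bsel b) b])
  (B : {fset zvec p})
  (HB : forall z, z \in B <->
          exists b, [/\ deg2 b, nontrivial_fiber b & z \in Bsel b]) :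
  minimal_markov_basis B.
Proof.
case: p hp Bsel Hfib Hsel B HB => [//|n] _ Bsel Hfib Hsel B HB.
split; first exact: (@B_markov n Bsel Hsel B HB).
exact: (@B_minimal n Bsel Hfib Hsel B HB).
Qed.
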